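(* Consider the parallel multiple access channel power allocation game with $K$ users and $A$ nodes, as described in the context, with random channel gains. If $p\in\Delta$ is a Nash equilibrium, then almost surely $p$ lies in the relative interior of a face of the polytope $\Delta$ of dimension at most $A-1$.
   Context: Setting: users $\mathcal{K}=\{1,\dots,K\}$, nodes $\mathcal{A}=\{1,\dots,A\}$. User $k$ has maximum power $P_k>0$ and strategy set $\Delta_k=\{p_k\in\mathbb{R}^{\mathcal{A}}: p_{k\alpha}\ge 0,\ \sum_\alpha p_{k\alpha}=P_k\}$ (a scaled simplex); $\Delta=\prod_k\Delta_k\subset\mathbb{R}^{KA}$. Payoffs: $u_k(p)=\sum_{\alpha} b_\alpha\log\bigl(1+\frac{g_{k\alpha}p_{k\alpha}}{\sigma_\alpha^2+\sum_{\ell\neq k}g_{\ell\alpha}p_{\ell\alpha}}\bigr)$ with constants $b_\alpha>0$, $\sigma_\alpha^2>0$ and random channel gains $g_{k\alpha}>0$ drawn from a continuous (nonatomic) probability distribution on the positive reals; ''almost surely'' refers to their law. $q\in\Delta$ is a Nash equilibrium if $u_k(q)\ge u_k(q_{-k};q_k')$ for all $k$ and all $q_k'\in\Delta_k$. *)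

From HB Require Import structures.
From mathcomp Require Import all_boot all_order all_algebra.
From mathcomp Require Import all_classical all_reals all_analysis.
Set Implicit Arguments. Unset Strict Implicit. Unset Printing Implicit Defensive.
Import Order.TTheory GRing.Theory Num.Theory.
Local Open Scope classical_set_scope.
Local Open Scope ring_scope.

Section PMAC.
Variables (R : realType) (K A : nat).

Definition profile := 'M[R]_(K, A).

Definition strat_set (Pk : R) (x : 'I_A -> R) : Prop :=
  (forall a, 0 <= x a) /\ \sum_a x a = Pk.

Definition Delta (Pw : 'I_K -> R) : set profile :=
  [set p | forall k, strat_set (Pw k) (fun a => p k a)].

Definition payoff (b s2 : 'I_A -> R) (g : 'I_K -> 'I_A -> R)
  (p : profile) (k : 'I_K) : R :=
  \sum_a b a * ln (1 + g k a * p k a /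
                       (s2 a + \sum_(l | l != k) g l a * p l a)).

Definition deviate (p : profile) (k : 'I_K) (x : 'I_A -> R) : profile :=
  \matrix_(i, j) if i == k then x j else p i j.

Definition nash_eq (Pw : 'I_K -> R) (b s2 : 'I_A -> R)
  (g : 'I_K -> 'I_A -> R) (q : profile) : Prop :=
  Delta Pw q /\
  forall k x, strat_set (Pw k) x ->
    payoff b s2 g (deviate q k x) k <= payoff b s2 g q k.

Definition convex_set (S : set profile) : Prop :=
  forall x y (t : R), S x -> S y -> 0 <= t <= 1 -> S (t *: x + (1 - t) *: y).

Definition is_face (C F : set profile) : Prop :=
  [/\ F `<=` C, convex_set F &
      forall x y (t : R), C x -> C y -> 0 < t < 1 ->
        F (t *: x + (1 - t) *: y) -> F x /\ F y].

Definition aff_hull (F : set profile) : set profile :=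
  [set q | exists n (x : 'I_n -> profile) (w : 'I_n -> R),
     [/\ forall i, F (x i), \sum_i w i = 1 & q = \sum_i w i *: x i]].

(* dim (aff F) <= d : any d+2 points of F are affinely dependent *)
Definition affdim_le (F : set profile) (d : nat) : Prop :=
  forall x : 'I_d.+2 -> profile, (forall i, F (x i)) ->
    exists c : 'I_d.+2 -> R,
      [/\ exists i, c i != 0, \sum_i c i = 0 & \sum_i c i *: x i = 0].

Definition rel_interior (F : set profile) : set profile :=
  [set p | F p /\ exists2 e : R, 0 < e &
     forall q, aff_hull F q -> (forall i j, `|q i j - p i j| < e) -> F q].

End PMAC.

Definition mutually_independent {d} {T : measurableType d} {R : realType}
  (P : probability T R) (I : finType) (X : I -> T -> R) : Prop :=
  forall B : I -> set R, (forall i, measurable (B i)) ->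
    P (\bigcap_(i in [set: I]) (X i @^-1` B i)) =
    (\big[*%E/1%E]_(i : I) P (X i @^-1` B i))%E.

(* At a Nash equilibrium p every user water-fills: on the nodes it uses, its
   marginal gain b_a g_ka / (s2_a + sum_l g_la p_la) is the same, so
   ln g_ka = mu_k + rho_a on the support of p.  A support with K + A cells
   contains a cycle of the bipartite user/node graph, along which the
   alternating sum of the ln g_ka then vanishes.  For independent nonatomic
   gains this has probability 0, because one gain would be a measurable
   function of the others.  Hence almost surely the support has at most
   K + A - 1 cells, and p lies in the relative interior of the face of Delta
   of profiles supported inside it, whose dimension is at most
   #|support| - K <= A - 1. *)

From HB Require Import structures.
From mathcomp Require Import all_boot all_order all_algebra.
From mathcomp Require Import all_classical all_reals all_analysis.
From mathcomp Require Import ring lra zify.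
Set Implicit Arguments. Unset Strict Implicit. Unset Printing Implicit Defensive.
Import Order.TTheory GRing.Theory Num.Theory.
Local Open Scope classical_set_scope.
Local Open Scope ring_scope.

Lemma ln_sub_ge (R : realType) (s t : R) : 0 < s -> 0 < t ->
  (t - s) / t <= ln t - ln s.
Proof.
move=> s0 t0; have : -1 < s / t - 1 by rewrite ltrBrDr addrC subrr divr_gt0.
move/le_ln1Dx; rewrite addrC subrK ln_div ?posrE //.
have -> : (t - s) / t = 1 - s / t by rewrite mulrBl divff ?gt_eqF.
lra.
Qed.

Lemma ln1D_sub_ge (R : realType) (c G y z : R) :
  0 < c -> 0 < G -> 0 <= y -> 0 <= z ->
  G * (z - y) / (c + G * z) <= ln (1 + G * z / c) - ln (1 + G * y / c).
Proof.
move=> c0 G0 y0 z0.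
have pos u : 0 <= u -> 0 < c + G * u.
  by move=> u0; have := mulr_ge0 (ltW G0) u0; lra.
have lnE u : 0 <= u -> ln (1 + G * u / c) = ln (c + G * u) - ln c.
  move=> u0; rewrite -ln_div ?posrE ?pos //; congr ln; field; exact: lt0r_neq0.
rewrite !lnE // opprB addrA subrK.
have -> : G * (z - y) = c + G * z - (c + G * y) by ring.
exact: ln_sub_ge (pos y y0) (pos z z0).
Qed.

Lemma ge0_affine_near0 (R : realFieldType) (u v y : R) : 0 < y ->
  (forall e, 0 < e <= y -> 0 <= u + e * v) -> 0 <= u.
Proof.
move=> y0 h; rewrite leNgt; apply/negP => u0.
have v1 : 0 < `|v| + 1 by rewrite ltr_wpDl.
pose e := Num.min y (- u / (`|v| + 1)).
have e0 : 0 < e by rewrite lt_min y0 divr_gt0 // oppr_gt0.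
have eu : e * (`|v| + 1) <= - u by rewrite -ler_pdivlMr // ge_min lexx orbT.
have ev : e * v <= e * `|v| := ler_wpM2l (ltW e0) (ler_norm v).
have ey : e <= y by rewrite ge_min lexx.
have := h e; rewrite e0 ey => /(_ isT).
rewrite mulrDr mulr1 in eu; lra.
Qed.

Lemma Delta_ge0 (R : realType) (K A : nat) (Pw : 'I_K -> R) (p : 'M[R]_(K, A)) k a :
  Delta Pw p -> 0 <= p k a.
Proof. by move=> /(_ k) [+ _]; apply. Qed.

Lemma sum_indicator (R : pzRingType) (I : finType) (i0 : I) :
  \sum_i ((i == i0)%:R : R) = 1.
Proof. by rewrite (bigD1 i0) //= eqxx big1 ?addr0 // => i /negbTE ->. Qed.

Definition shift_power (R : pzRingType) (A : nat) (x : 'I_A -> R) (a a' : 'I_A) (e : R) j :=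
  x j - e * (j == a)%:R + e * (j == a')%:R.

Section ShiftPower.
Variables (R : realType) (A : nat) (x : 'I_A -> R) (a a' : 'I_A) (e : R).
Hypothesis aa' : a != a'.

Lemma shift_power_src : shift_power x a a' e a = x a - e.
Proof. by rewrite /shift_power eqxx (negbTE aa') mulr1 mulr0 addr0. Qed.

Lemma shift_power_dst : shift_power x a a' e a' = x a' + e.
Proof. by rewrite /shift_power eqxx eq_sym (negbTE aa') mulr1 mulr0 subr0. Qed.

Lemma shift_power_other j : j != a -> j != a' -> shift_power x a a' e j = x j.
Proof. by move=> ja ja'; rewrite /shift_power (negbTE ja) (negbTE ja') !mulr0 subr0 addr0. Qed.

Lemma strat_set_shift Pk : strat_set Pk x -> 0 <= e <= x a ->
  strat_set Pk (shift_power x a a' e).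
Proof.
move=> [x0 <-] /andP [e0 ea]; split.
  move=> j; have [->|ja] := eqVneq j a; first by rewrite shift_power_src subr_ge0.
  have [->|ja'] := eqVneq j a'; first by rewrite shift_power_dst addr_ge0.
  by rewrite shift_power_other.
rewrite /shift_power big_split sumrB /= -!mulr_sumr !sum_indicator; ring.
Qed.
End ShiftPower.

Lemma nonzero_left_kernel (F : fieldType) m n (B : 'M[F]_(m, n)) :
  (\rank B < m)%N -> exists2 v : 'rV_m, v != 0 & v *m B = 0.
Proof.
move=> rB; have : ~~ row_free B by rewrite /row_free neq_ltn rB.
by rewrite -kermx_eq0 => /rowV0Pn [v /sub_kermxP vB v0]; exists v.
Qed.

Section SupportFace.
Variables (R : realType) (K A : nat) (Pw : 'I_K -> R) (p : 'M[R]_(K, A)).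
Hypothesis hp : Delta Pw p.

Definition power_support : {set 'I_K * 'I_A} := [set ij | p ij.1 ij.2 != 0].

Definition support_face : set 'M[R]_(K, A) :=
  [set q | Delta Pw q /\ forall i j, p i j = 0 -> q i j = 0].

Lemma support_face_face : is_face (Delta Pw) support_face.
Proof.
split.
- by move=> q [].
- move=> x y t [hx zx] [hy zy] /andP [t0 t1]; split.
    move=> k; split.
      move=> j; rewrite !mxE; apply: addr_ge0; apply: mulr_ge0;
        by rewrite ?subr_ge0 ?(Delta_ge0 k j hx) ?(Delta_ge0 k j hy).
    case: (hx k) => _ sx; case: (hy k) => _ sy.
    under eq_bigr do rewrite !mxE.
    by rewrite big_split /= -!mulr_sumr sx sy; ring.
  by move=> i j pij; rewrite !mxE zx // zy // !mulr0 addr0.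
- move=> x y t hx hy /andP [t0 t1] [_ zz].
  have t1' : 0 <= 1 - t by rewrite subr_ge0 ltW.
  have t'0 : 1 - t != 0 by rewrite subr_eq0 eq_sym lt_eqF.
  have zxy i j : p i j = 0 -> x i j = 0 /\ y i j = 0.
    move=> pij; have := zz i j pij; rewrite !mxE => h.
    have := mulr_ge0 (ltW t0) (Delta_ge0 i j hx).
    have := mulr_ge0 t1' (Delta_ge0 i j hy) => h2 h1.
    split; [apply: (mulfI (lt0r_neq0 t0)) | apply: (mulfI t'0)]; rewrite mulr0; lra.
  by split; split => // i j /zxy [].
Qed.

Lemma support_face_relint : rel_interior support_face p.
Proof.
split; first by split.
pose e := \big[Num.min/1]_(ij in power_support) p ij.1 ij.2.
have e0 : 0 < e.
  rewrite /e; elim/big_ind: _ => //; first by move=> u v u0 v0; rewrite lt_min u0 v0.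
  by move=> [i j]; rewrite inE lt_neqAle eq_sym => ->; exact: Delta_ge0.
have ele i j : p i j != 0 -> e <= p i j.
  by move=> pij; rewrite /e (bigD1 (i, j)) ?inE //= ge_min lexx.
exists e => // q [n [x [w [hx sw ->]]]] hq.
have zq i j : p i j = 0 -> (\sum_l w l *: x l) i j = 0.
  move=> pij; rewrite summxE big1 // => l _; rewrite mxE.
  by case: (hx l) => _ /(_ i j pij) ->; rewrite mulr0.
split=> // k; split.
  move=> j; have [pkj|pkj] := eqVneq (p k j) 0; first by rewrite zq.
  have := hq k j; rewrite ltr_norml => /andP [h _].
  have := ele k j pkj; lra.
under eq_bigr do rewrite summxE.
rewrite exchange_big /=.
under eq_bigr => l _.
  under eq_bigr do rewrite mxE.
  rewrite -mulr_sumr; case: (hx l) => /(_ k) [_ ->] _.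
  over.
by rewrite -mulr_suml sw mul1r.
Qed.

Hypotheses (hPw : forall k, 0 < Pw k) (hA : (0 < A)%N).

(* The default [Ordinal hA] is never taken: every row of [p] has positive total. *)
Definition pivot (k : 'I_K) : 'I_A := odflt (Ordinal hA) [pick j | p k j != 0].

Lemma pivot_support k : p k (pivot k) != 0.
Proof.
rewrite /pivot; case: pickP => [j //|h].
case: (hp k) => _ hs; have := hPw k; rewrite -hs big1 ?ltxx // => j _.
by have /negbFE/eqP := h j.
Qed.

Definition free_support : {set 'I_K * 'I_A} :=
  [set ij in power_support | ij.2 != pivot ij.1].

Lemma card_free_support : (#|free_support| + K = #|power_support|)%N.
Proof.
pose pivots : {set 'I_K * 'I_A} := [set (k, pivot k) | k : 'I_K].
have card_pivots : #|pivots| = K.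
  by rewrite card_imset ?card_ord // => k1 k2 /(congr1 fst).
have pivots_sub : pivots \subset power_support.
  by apply/fintype.subsetP => _ /imsetP [k _ ->]; rewrite inE /= pivot_support.
have -> : free_support = power_support :\: pivots.
  apply/setP => [[k j]]; rewrite !inE /= andbC; congr (_ && _).
  apply/idP/idP => [h|]; last by apply: contra => /eqP ->; apply/imsetP; exists k.
  by apply/imsetP => -[k' _ [e1 e2]]; move: h; rewrite e2 e1 eqxx.
rewrite cardsD (finset.setIidPr pivots_sub) card_pivots subnK //.
by have := subset_leq_card pivots_sub; rewrite card_pivots.
Qed.

(* Off-support coordinates vanish and row sums are fixed, so the
   [free_support] coordinates together with the constant 1 are at most
   [d + 1] linear functionals determining a point of the face; they cannot
   separate [d + 2] points. *)
Lemma support_face_affdim d : (#|power_support| <= K + d)%N -> affdim_le support_face d.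
Proof.
move=> hS x hx; have cE := card_free_support; set m := #|free_support| in cE.
have mn : (1 + m < d.+2)%N by lia.
pose M : 'M[R]_(d.+2, m) := \matrix_(i, e) x i (enum_val e).1 (enum_val e).2.
pose B := row_mx (const_mx 1 : 'M[R]_(d.+2, 1)) M.
have [v v0] := nonzero_left_kernel (leq_ltn_trans (rank_leq_col B) mn).
rewrite mul_mx_row => /eqP; rewrite row_mx_eq0 => /andP [/eqP v1 /eqP vM].
have sum_v : \sum_i v 0 i = 0.
  have := congr1 (fun N : 'M[R]_(1, 1) => N 0 0) v1; rewrite !mxE => h.
  by rewrite -[RHS]h; apply: eq_bigr => i _; rewrite mxE mulr1.
have off_pivot k j : j != pivot k -> \sum_i v 0 i * x i k j = 0.
  move=> jk; have [pkj|pkj] := eqVneq (p k j) 0.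
    by rewrite big1 // => i _; case: (hx i) => _ /(_ k j pkj) ->; rewrite mulr0.
  have hkj : (k, j) \in free_support by rewrite !inE /= pkj jk.
  have := congr1 (fun N : 'M[R]_(1, m) => N 0 (enum_rank_in hkj (k, j))) vM.
  rewrite /= !mxE => h; rewrite -[RHS]h; apply: eq_bigr => i _; rewrite mxE enum_rankK_in //.
have all_coords k j : \sum_i v 0 i * x i k j = 0.
  have [->|jk] := eqVneq j (pivot k); last exact: off_pivot.
  have row_sum i : x i k (pivot k) = Pw k - \sum_(j' | j' != pivot k) x i k j'.
    by case: (hx i) => /(_ k) [_ hs] _; rewrite -hs (bigD1 (pivot k)) //= addrK.
  under eq_bigr do rewrite row_sum mulrBr.
  rewrite sumrB -mulr_suml sum_v mul0r sub0r.
  under eq_bigr do rewrite mulr_sumr.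
  by rewrite exchange_big /= big1 ?oppr0 // => j' /off_pivot.
exists (fun i => v 0 i); split => //; first by case/rV0Pn: v0 => i; exists i.
by apply/matrixP => k j; rewrite summxE mxE -[RHS](all_coords k j);
  apply: eq_bigr => i _; rewrite mxE.
Qed.

End SupportFace.

Section WaterFilling.
Variables (R : realType) (K A : nat) (Pw : 'I_K -> R) (b s2 : 'I_A -> R)
  (g : 'I_K -> 'I_A -> R).
Hypotheses (hb : forall a, 0 < b a) (hs2 : forall a, 0 < s2 a)
  (hg : forall k a, 0 < g k a).

Definition interference (p : 'M[R]_(K, A)) k a :=
  s2 a + \sum_(l | l != k) g l a * p l a.
Definition received (p : 'M[R]_(K, A)) a := s2 a + \sum_l g l a * p l a.
Definition node_payoff (p : 'M[R]_(K, A)) k a y :=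
  b a * ln (1 + g k a * y / interference p k a).

Lemma received_interference p k a :
  received p a = interference p k a + g k a * p k a.
Proof. by rewrite /received /interference (bigD1 k) //=; ring. Qed.

Lemma load_ge0 p a (S : pred 'I_K) : Delta Pw p -> 0 <= \sum_(l | S l) g l a * p l a.
Proof.
by move=> hp; apply: sumr_ge0 => l _; exact: mulr_ge0 (ltW (hg l a)) (Delta_ge0 l a hp).
Qed.

Lemma interference_gt0 p k a : Delta Pw p -> 0 < interference p k a.
Proof. by move=> hp; exact: ltr_pwDl (hs2 a) (load_ge0 a (fun l => l != k) hp). Qed.

Lemma received_gt0 p a : Delta Pw p -> 0 < received p a.
Proof. by move=> hp; exact: ltr_pwDl (hs2 a) (load_ge0 a predT hp). Qed.

Lemma payoff_deviate p k x :
  payoff b s2 g (deviate p k x) k = \sum_a node_payoff p k a (x a).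
Proof.
apply: eq_bigr => a _; rewrite /node_payoff /interference !mxE eqxx.
by congr (_ * ln (1 + _ / (_ + _))); apply: eq_bigr => l /negbTE lk; rewrite mxE lk.
Qed.

Lemma payoff_node p k : payoff b s2 g p k = \sum_a node_payoff p k a (p k a).
Proof. by []. Qed.

Lemma payoff_shift p k a a' e : a != a' ->
  payoff b s2 g (deviate p k (shift_power (p k) a a' e)) k - payoff b s2 g p k =
  (node_payoff p k a (p k a - e) - node_payoff p k a (p k a)) +
  (node_payoff p k a' (p k a' + e) - node_payoff p k a' (p k a')).
Proof.
move=> aa'; rewrite payoff_deviate payoff_node -sumrB (bigD1 a) // (bigD1 a') /=;
  last by rewrite eq_sym.
rewrite big1 ?addr0 ?shift_power_src ?shift_power_dst //.
by move=> j /andP [ja ja']; rewrite shift_power_other // subrr.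
Qed.

(* Moving power [e] from node [a] to node [a'] does not pay; concavity of [ln]
   bounds the loss at [a] and the gain at [a'] by slopes at the far endpoints. *)
Lemma nash_shift_le p k a a' e : nash_eq Pw b s2 g p -> a != a' -> 0 < e <= p k a ->
  b a' * g k a' / (interference p k a' + g k a' * (p k a' + e))
  <= b a * g k a / (interference p k a + g k a * (p k a - e)).
Proof.
move=> [hp hn] aa' /andP [e0 ea].
have he : 0 <= e <= p k a by rewrite (ltW e0) ea.
have := hn k _ (strat_set_shift aa' (hp k) he).
rewrite -subr_le0 payoff_shift // /node_payoff -!mulrBr.
have y0 := Delta_ge0 k a hp; have y'0 := Delta_ge0 k a' hp.
have ye : 0 <= p k a - e by rewrite subr_ge0.
have y'e : 0 <= p k a' + e := addr_ge0 y'0 (ltW e0).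
have loss := ler_wpM2l (ltW (hb a))
  (ln1D_sub_ge (interference_gt0 k a hp) (hg k a) y0 ye).
have gain := ler_wpM2l (ltW (hb a'))
  (ln1D_sub_ge (interference_gt0 k a' hp) (hg k a') y'0 y'e).
move=> hle; rewrite -(ler_pM2l e0).
set D := interference p k a + _ in loss *; set D' := interference p k a' + _ in gain *.
have E1 : b a * (g k a * (p k a - e - p k a) / D) = - (e * (b a * g k a / D)).
  by ring.
have E2 : b a' * (g k a' * (p k a' + e - p k a') / D') = e * (b a' * g k a' / D').
  by ring.
rewrite E1 in loss; rewrite E2 in gain; lra.
Qed.

(* [e] tends to 0 in [nash_shift_le]. *)
Lemma nash_marginal_le p k a a' : nash_eq Pw b s2 g p -> 0 < p k a ->
  b a' * g k a' / received p a' <= b a * g k a / received p a.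
Proof.
move=> hn pka; have hp := hn.1.
have [<-//|aa'] := eqVneq a a'.
have Ta := received_gt0 a hp; have Ta' := received_gt0 a' hp.
rewrite ler_pdivrMr // mulrAC ler_pdivlMr // -subr_ge0.
rewrite !(received_interference p k).
apply: (@ge0_affine_near0 _ _ (b a * g k a * g k a' + b a' * g k a' * g k a) _ pka).
move=> e he; have := nash_shift_le hn aa' he.
have y'0 := Delta_ge0 k a' hp; have /andP [e0 ea] := he.
have D0 : 0 < interference p k a + g k a * (p k a - e).
  by apply: ltr_wpDr (interference_gt0 k a hp);
     apply: mulr_ge0 (ltW (hg k a)) _; rewrite subr_ge0.
have D'0 : 0 < interference p k a' + g k a' * (p k a' + e).
  by apply: ltr_wpDr (interference_gt0 k a' hp);
     apply: mulr_ge0 (ltW (hg k a')) (addr_ge0 y'0 (ltW e0)).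
rewrite ler_pdivrMr // mulrAC ler_pdivlMr //; lra.
Qed.

Definition log_generic :=
  forall S : {set 'I_K * 'I_A}, (K + A <= #|S|)%N ->
    ~ exists (mu : 'I_K -> R) (rho : 'I_A -> R),
        forall k a, (k, a) \in S -> ln (g k a) = mu k + rho a.

Lemma nash_log_gains p : nash_eq Pw b s2 g p ->
  exists (mu : 'I_K -> R) (rho : 'I_A -> R),
    forall k a, 0 < p k a -> ln (g k a) = mu k + rho a.
Proof.
move=> hn; have hp := hn.1.
pose marginal k a := b a * g k a / received p a.
have marginal_gt0 k a : 0 < marginal k a.
  by rewrite divr_gt0 ?received_gt0 ?mulr_gt0.
pose mu k := if [pick a | 0 < p k a] is Some a then ln (marginal k a) else 0.
exists mu, (fun a => ln (received p a / b a)) => k a pka.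
rewrite /mu; case: pickP => [a0 pka0|]; last by move/(_ a); rewrite pka.
have -> : marginal k a0 = marginal k a.
  by apply/eqP; rewrite eq_le !nash_marginal_le.
rewrite -lnM ?posrE ?divr_gt0 ?received_gt0 //; last exact: mulr_gt0.
by congr ln; rewrite /marginal; field; rewrite !gt_eqF ?received_gt0.
Qed.

Lemma nash_support_lt p : log_generic -> nash_eq Pw b s2 g p ->
  (#|power_support p| < K + A)%N.
Proof.
move=> gen hn; rewrite ltnNge; apply/negP => hS; apply: (gen (power_support p) hS).
have [mu [rho h]] := nash_log_gains hn.
exists mu, rho => k a; rewrite inE /= => pka; apply: h.
by rewrite lt_neqAle eq_sym pka (Delta_ge0 k a hn.1).
Qed.

End WaterFilling.

Section ZeroMargins.
Variables (F : fieldType) (K A : nat).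

Lemma sum_pair_fst_indicator (f : 'I_K -> 'I_A -> F) k :
  \sum_(s : 'I_K * 'I_A) (s.1 == k)%:R * f s.1 s.2 = \sum_a f k a.
Proof.
rewrite -(pair_bigA _ (fun i j => (i == k)%:R * f i j)) /= (bigD1 k) //=.
rewrite [X in _ + X]big1 ?addr0 => [|i /negbTE ik].
  by apply: eq_bigr => a _; rewrite eqxx mul1r.
by rewrite big1 // => a _; rewrite ik mul0r.
Qed.

Lemma sum_pair_snd_indicator (f : 'I_K -> 'I_A -> F) a :
  \sum_(s : 'I_K * 'I_A) (s.2 == a)%:R * f s.1 s.2 = \sum_k f k a.
Proof.
rewrite -(pair_bigA _ (fun i j => (j == a)%:R * f i j)) /=.
apply: eq_bigr => k _; rewrite (bigD1 a) //= eqxx mul1r big1 ?addr0 //.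
by move=> j /negbTE ->; rewrite mul0r.
Qed.

(* The incidence matrix of [S] against users and nodes has rank < K + A: the
   vector (1, ..., 1, -1, ..., -1) is in the kernel of its transpose. *)
Lemma exists_zero_margins (S : {set 'I_K * 'I_A}) :
  (0 < K)%N -> (K + A <= #|S|)%N ->
  exists c : 'I_K -> 'I_A -> F, [/\ exists k a, c k a != 0,
     forall k a, (k, a) \notin S -> c k a = 0,
     forall k, \sum_a c k a = 0 & forall a, \sum_k c k a = 0].
Proof.
move=> K0 hS; set N := #|S| in hS *.
pose B1 : 'M[F]_(N, K) := \matrix_(e, k) ((enum_val e).1 == k)%:R.
pose B2 : 'M[F]_(N, A) := \matrix_(e, a) ((enum_val e).2 == a)%:R.
pose B := row_mx B1 B2.
pose u : 'rV[F]_(K + A) := row_mx (const_mx 1) (const_mx (-1)).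
have uB : u *m B^T = 0.
  rewrite tr_row_mx mul_row_col; apply/rowP => e; rewrite !mxE.
  under eq_bigr do rewrite !mxE mul1r eq_sym.
  under [X in _ + X]eq_bigr do rewrite !mxE mulN1r eq_sym.
  by rewrite sumrN !sum_indicator subrr.
have u0 : \rank u != 0%N.
  rewrite mxrank_eq0; apply/rV0Pn; exists (lshift A (Ordinal K0)).
  by rewrite row_mxEl mxE oner_eq0.
have rB : (\rank B < N)%N.
  have := mxrankS (introT sub_kermxP uB).
  by rewrite mxrank_ker mxrank_tr; have := rank_leq_col B; lia.
have [v v0 vB] := nonzero_left_kernel rB.
move: vB; rewrite mul_mx_row => /eqP; rewrite row_mx_eq0 => /andP [/eqP v1 /eqP v2].
have N0 : (0 < N)%N by lia.
have e0S : enum_val (Ordinal N0) \in S := enum_valP _.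
pose c k a := if (k, a) \in S then v 0 (enum_rank_in e0S (k, a)) else 0.
have sum_c (f : 'I_K * 'I_A -> F) :
    \sum_s f s * c s.1 s.2 = \sum_(e < N) f (enum_val e) * v 0 e.
  transitivity (\sum_(s in S) f s * v 0 (enum_rank_in e0S s)).
    rewrite [RHS]big_mkcond; apply: eq_bigr => -[k a] _ /=; rewrite /c.
    by case: ifP => _; rewrite ?mulr0.
  by rewrite big_enum_val; apply: eq_bigr => e _; rewrite enum_valK_in.
exists c; split.
- case/rV0Pn: v0 => e ve; exists (enum_val e).1, (enum_val e).2.
  by rewrite /c -surjective_pairing enum_valP enum_valK_in.
- by move=> k a /negbTE h; rewrite /c h.
- move=> k; rewrite -sum_pair_fst_indicator (sum_c (fun s => (s.1 == k)%:R)).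
  have := congr1 (fun M : 'M[F]_(1, K) => M 0 k) v1; rewrite !mxE => h.
  by rewrite -[RHS]h; apply: eq_bigr => e _; rewrite mxE mulrC.
- move=> a; rewrite -sum_pair_snd_indicator (sum_c (fun s => (s.2 == a)%:R)).
  have := congr1 (fun M : 'M[F]_(1, A) => M 0 a) v2; rewrite !mxE => h.
  by rewrite -[RHS]h; apply: eq_bigr => e _; rewrite mxE mulrC.
Qed.

Lemma zero_margins_sum_additive (c : 'I_K -> 'I_A -> F) mu rho :
  (forall k, \sum_a c k a = 0) -> (forall a, \sum_k c k a = 0) ->
  \sum_(i : 'I_K * 'I_A) c i.1 i.2 * (mu i.1 + rho i.2) = 0.
Proof.
move=> crow ccol; rewrite -(pair_bigA _ (fun k a => c k a * (mu k + rho a))) /=.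
under eq_bigr do under eq_bigr do rewrite mulrDr.
under eq_bigr do rewrite big_split /= -mulr_suml crow mul0r add0r.
by rewrite exchange_big big1 //= => a _; rewrite -mulr_suml ccol mul0r.
Qed.

End ZeroMargins.

Section OtherCoordinates.
Context d (T : measurableType d) (R : realType) (P : probability T R).
Variables (I : finType) (X : I -> T -> R) (i0 : I).
Hypothesis mX : forall i, measurable_fun setT (X i).

(* A pi-system generating the sigma-algebra of the coordinates other than [i0]. *)
Definition other_rects : set (set T) := [set E | exists B : I -> set R,
  [/\ (forall i, measurable (B i)), B i0 = setT &
      E = \bigcap_(i in [set: I]) X i @^-1` B i]].

Let preimage_measurable i (B : set R) : measurable B -> measurable (X i @^-1` B).
Proof. by move=> mB; rewrite -[Y in measurable Y]setTI; exact: mX. Qed.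

Let other_rects_sub : other_rects `<=` measurable.
Proof.
move=> _ [B [mB _ ->]]; apply: fin_bigcap_measurable; first exact: finite_finset.
by move=> i _; exact: preimage_measurable.
Qed.

Lemma other_rects_measurable : <<s other_rects >> `<=` measurable.
Proof. by apply: smallest_sub => //; exact: sigma_algebra_measurable. Qed.

Lemma other_rects_preimage i (D : set R) : i != i0 -> measurable D ->
  other_rects (X i @^-1` D).
Proof.
move=> ii0 mD; exists (fun j => if j == i then D else setT); split.
- by move=> j; case: eqP.
- by rewrite eq_sym (negbTE ii0).
- apply/seteqP; split => w /=; first by move=> h j _; case: eqP => [->|].
  by move=> /(_ i Logic.I); rewrite eqxx.
Qed.

Hypothesis indep : mutually_independent P X.

Let other_rects_setI : setI_closed other_rects.
Proof.
move=> _ _ [B [mB Bi0 ->]] [B' [mB' B'i0 ->]].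
exists (fun i => B i `&` B' i); split.
- by move=> i; exact: measurableI.
- by rewrite Bi0 B'i0 setTI.
- by rewrite -bigcapI; apply: eq_bigcapr => i _; rewrite preimage_setI.
Qed.

Let other_rects_setT : other_rects setT.
Proof. by exists (fun=> setT); split => //; apply/seteqP; split => w. Qed.

Let indep_other_rect C E : measurable C -> other_rects E ->
  P (X i0 @^-1` C `&` E) = (P (X i0 @^-1` C) * P E)%E.
Proof.
move=> mC [B [mB Bi0 ->]].
pose B' i := if i == i0 then C else B i.
have mB' i : measurable (B' i) by rewrite /B'; case: eqP.
have -> : X i0 @^-1` C `&` \bigcap_(i in setT) X i @^-1` B i =
          \bigcap_(i in setT) X i @^-1` B' i.
  apply/seteqP; split => w /=.
    by move=> [hC hB] i _; rewrite /B'; case: eqP => [->|_] //; exact: hB.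
  move=> h; split; first by have := h i0 Logic.I; rewrite /B' eqxx.
  by move=> i _; have := h i Logic.I; rewrite /B'; case: eqP => [->|]; rewrite ?Bi0.
rewrite !indep // (bigD1 i0) //= [X in _ = (_ * X)%E](bigD1 i0) //=.
rewrite /B' eqxx Bi0 preimage_setT probability_setT mul1e.
by congr (_ * _)%E; apply: eq_bigr => i /negbTE ->.
Qed.

Lemma indep_other_events C E : measurable C -> <<s other_rects >> E ->
  P (X i0 @^-1` C `&` E) = (P (X i0 @^-1` C) * P E)%E.
Proof.
move=> mC sE; have mXC := preimage_measurable i0 mC.
have finXC := fin_num_measure P _ mXC.
pose r := NngNum (fine_ge0 (measure_ge0 P (X i0 @^-1` C))).
have cover : \bigcup_(k : nat) (fun=> setT : set T) k = setT.
  by apply/seteqP; split => // w _; exists 0%N.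
have := g_sigma_algebra_measure_unique other_rects other_rects_sub (fun=> setT)
  (fun=> other_rects_setT) cover (mrestr P mXC) (mscale r P) other_rects_setI.
move=> /(_ _ _ E sE) eq12; rewrite setIC.
transitivity (mrestr P mXC E) => //; rewrite eq12.
  by rewrite -[P (X i0 @^-1` C) in RHS]fineK.
- move=> A' hA'.
  change (P (A' `&` X i0 @^-1` C) = (fine (P (X i0 @^-1` C)))%:E * P A')%E.
  by rewrite fineK // setIC; exact: indep_other_rect.
- move=> k; rewrite /mrestr /=; apply: (le_lt_trans (probability_le1 P _)).
    exact: measurableI.
  by rewrite ltry.
Qed.

End OtherCoordinates.

Section IndependentDiagonal.
Context d (T : measurableType d) (R : realType) (P : probability T R).
Variables (X Z : T -> R).
Hypotheses (mX : measurable_fun setT X) (mZ : measurable_fun setT Z).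
Hypothesis XZ_indep : forall C D, measurable C -> measurable D ->
  P (X @^-1` C `&` Z @^-1` D) = (P (X @^-1` C) * P (Z @^-1` D))%E.
Hypothesis X_nonatomic : forall x, P (X @^-1` [set x]) = 0%E.

Lemma eq_indep_nonatomic_negligible : P.-negligible [set w | X w = Z w].
Proof.
pose muX := distribution P (mfun_Sub (mem_set mX : X \in mfun)).
pose muZ := distribution P (mfun_Sub (mem_set mZ : Z \in mfun)).
have mXZ := measurable_fun_pair mX mZ.
pose muXZ := distribution P (mfun_Sub (mem_set mXZ : _ \in mfun)).
have joint D : measurable D -> muXZ D = (muX \x^ muZ)%E D.
  pose G := [set A `*` B | A in @measurable _ R & B in @measurable _ R].
  apply: (measure_unique G (fun=> setT)) => //.
  - exact: measurable_prod_measurableType.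
  - move=> _ _ [A mA [B mB <-]] [A' mA' [B' mB' <-]]; rewrite -setXI.
    by exists (A `&` A'); [exact: measurableI | exists (B `&` B'); [exact: measurableI|]].
  - by move=> k; exists setT => //; exists setT => //; rewrite setXTT.
  - by apply/seteqP; split => // w _; exists 0%N.
  - move=> _ [A mA [B mB <-]].
    change (muXZ (A `*` B) = (muX \x^ muZ)%E (A `*` B)).
    by rewrite product_measure2E //; exact: XZ_indep.
  - by move=> k; change (muXZ setT < +oo)%E; rewrite /muXZ probability_setT ltry.
pose diag : set (R * R) := [set z | z.1 = z.2].
have mdiag : measurable diag.
  have -> : diag = (fun z : R * R => z.1 - z.2) @^-1` [set 0].
    apply/seteqP; split => z /=; first by move=> ->; rewrite subrr.
    by move/eqP; rewrite subr_eq0 => /eqP.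
  rewrite -[Y in measurable Y]setTI.
  exact: (measurable_realfun.measurable_funB measurable_fst measurable_snd).
have meq : measurable [set w | X w = Z w].
  by rewrite -[Y in measurable Y]setTI; exact: (mXZ measurableT _ mdiag).
apply/(negligibleP _ meq); change (muXZ diag = 0%E); rewrite joint //.
apply: integral0_eq => y _ /=.
have -> : ysection diag y = [set y] by apply/seteqP; split => x; rewrite /ysection /= inE.
exact: X_nonatomic.
Qed.

End IndependentDiagonal.

Lemma ae_sum_ln_neq0 d (T : measurableType d) (R : realType) (P : probability T R)
  (I : finType) (X : I -> T -> R) (c : I -> R) (i0 : I) :
  (forall i, measurable_fun setT (X i)) -> mutually_independent P X ->
  (forall x, P (X i0 @^-1` [set x]) = 0%E) -> (forall i w, 0 < X i w) ->
  c i0 != 0 -> {ae P, forall w, \sum_i c i * ln (X i w) != 0}.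
Proof.
move=> mX indep X_nonatomic Xpos c0.
(* On the event, [X i0 = Z] with [Z] a function of the other coordinates. *)
pose rest w := \sum_i (if i != i0 then c i * ln (X i w) else 0).
pose Z w := expR (- (c i0)^-1 * rest w).
have mZ_other :
    measurable_fun (setT : set (g_sigma_algebraType (other_rects X i0))) Z.
  apply: measurableT_comp; first exact: measurable_realfun.measurable_expR.
  apply: measurable_realfun.measurable_funM; first exact: measurable_cst.
  apply: measurable_sum => i; case: (boolP (i != i0)) => ii0; last exact: measurable_cst.
  apply: measurable_realfun.measurable_funM; first exact: measurable_cst.
  apply: measurableT_comp; first exact: measurable_realfun.measurable_ln.
  by move=> _ D mD; rewrite setTI; apply: sub_sigma_algebra; exact: other_rects_preimage.
have Zpre D : measurable D -> <<s other_rects X i0 >> (Z @^-1` D).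
  by move=> mD; have := mZ_other measurableT D mD; rewrite setTI.
have mZ : measurable_fun setT Z.
  by move=> _ D mD; rewrite setTI; exact: other_rects_measurable (Zpre D mD).
apply: (negligibleS _ (eq_indep_nonatomic_negligible (mX i0) mZ
  (fun C D mC mD => indep_other_events mX indep mC (Zpre D mD)) X_nonatomic)).
move=> w /= /negP /negbNE /eqP; rewrite (bigD1 i0) //= big_mkcond => hw.
rewrite /Z; have -> : - (c i0)^-1 * rest w = ln (X i0 w).
  apply: (mulfI c0); rewrite mulrA mulrN divff // mulN1r /rest; lra.
by rewrite lnK // posrE.
Qed.

Lemma ae_log_generic (R : realType) (K A : nat) (hK : (0 < K)%N)
  d (T : measurableType d) (P : probability T R) (G : 'I_K -> 'I_A -> T -> R) :
  (forall k a, measurable_fun setT (G k a)) -> (forall k a w, 0 < G k a w) ->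
  mutually_independent P (fun ka : 'I_K * 'I_A => G ka.1 ka.2) ->
  (forall k a (x : R), P (G k a @^-1` [set x]) = 0%E) ->
  {ae P, forall w, log_generic (fun k a => G k a w)}.
Proof.
move=> G_meas G_pos G_indep G_nonatomic.
apply: filter_forall => S; apply: filter_imply => hS.
have [c [[k0 [a0 c0]] cS crow ccol]] := exists_zero_margins R hK hS.
apply: filterS (ae_sum_ln_neq0 (c := fun i => c i.1 i.2) (i0 := (k0, a0))
  (fun i => G_meas i.1 i.2) G_indep (G_nonatomic k0 a0) (fun i => G_pos i.1 i.2) c0).
move=> w /eqP + [mu [rho h]]; apply.
rewrite -[RHS](zero_margins_sum_additive mu rho crow ccol); apply: eq_bigr => -[k a] _ /=.
by have [/h ->|/cS ->] := boolP ((k, a) \in S); rewrite ?mul0r.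
Qed.

Theorem corollary2 (R : realType) (K A : nat) (hK : (0 < K)%N) (hA : (0 < A)%N)
  (Pw : 'I_K -> R) (hPw : forall k, 0 < Pw k)
  (b s2 : 'I_A -> R) (hb : forall a, 0 < b a) (hs2 : forall a, 0 < s2 a)
  (d : measure_display) (T : measurableType d) (P : probability T R)
  (G : 'I_K -> 'I_A -> T -> R)
  (G_meas : forall k a, measurable_fun setT (G k a))
  (G_pos : forall k a w, 0 < G k a w)
  (G_indep : mutually_independent P (fun ka : 'I_K * 'I_A => G ka.1 ka.2))
  (G_ident : forall k a k' a' (B : set R), measurable B ->
     P (G k a @^-1` B) = P (G k' a' @^-1` B))
  (G_nonatomic : forall k a (x : R), P (G k a @^-1` [set x]) = 0%E) :
  {ae P, forall w,
     forall p : 'M[R]_(K, A), nash_eq Pw b s2 (fun k a => G k a w) p ->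
       exists F : set 'M[R]_(K, A),
         [/\ is_face (Delta Pw) F, affdim_le F A.-1 & rel_interior F p]}.
Proof.
apply: filterS (ae_log_generic hK G_meas G_pos G_indep G_nonatomic) => w gen p hn.
have hg k a : 0 < G k a w := G_pos k a w.
have small := nash_support_lt hb hs2 hg gen hn.
exists (support_face Pw p); split.
- exact: support_face_face.
- by apply: (support_face_affdim hn.1 hPw hA); lia.
- exact: support_face_relint hn.1.
Qed.
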